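(* Consider three agents $a,b,c$, each starting with an input value in $\{0,1\}$ (all $8$ input assignments are possible), communicating in the full-information iterated immediate snapshot model described in the context. For no number $R \ge 0$ of rounds does there exist a decision protocol solving the (0-)majority consensus task. That is, there is no family of functions $\delta_i$ ($i \in \{a,b,c\}$), mapping the possible final local states of agent $i$ after $R$ rounds to $\{0,1\}$, such that for every input assignment and every sequence of $R$ communication graphs from the immediate snapshot model, the output triple $(\delta_a(\ell_a),\delta_b(\ell_b),\delta_c(\ell_c))$ of the final local states satisfies both majority agreement and validity.
   Context: Agents: $\mathrm{Ag}=\{a,b,c\}$. A communication graph is a reflexive relation $G \subseteq \mathrm{Ag}\times\mathrm{Ag}$; write $j \to i$ for $(j,i)\in G$. Full-information dynamics: initially the local state of agent $i$ is its input value $x_i$. In a round with communication graph $G$, if the current local states are $(\ell_a,\ell_b,\ell_c)$, the new local state of agent $i$ is the tuple $(m_a,m_b,m_c)$ where $m_j=\ell_j$ if $j\to i$ in $G$ and $m_j=\bot$ (no message) otherwise. In each round a graph is chosen arbitrarily (independently of previous rounds) from the model's set of graphs. The immediate snapshot model is the set of $13$ graphs obtained as follows: for each ordered partition $(B_1,\dots,B_k)$ of $\mathrm{Ag}$ into nonempty blocks, $j\to i$ iff the block containing $j$ has index at most the index of the block containing $i$. Majority consensus task: each agent outputs a value in $\{0,1\}$ computed only from its final local state; (majority agreement) either all three outputs are equal, or a majority (at least two) of the outputs are $0$; (validity) every output value is one of the input values of the execution (in particular, if all inputs equal $v$ then all outputs equal $v$). *)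

From Stdlib Require Import List Bool Arith.
Import ListNotations.

Inductive agent : Type := Ag_a | Ag_b | Ag_c.

(* Full-information local states: initially an input value (bool, false = 0,
   true = 1); after a round, the triple (m_a, m_b, m_c) of received messages,
   None standing for "no message" (bottom). *)
Inductive lstate : Type :=
  | Inp : bool -> lstate
  | Msg : option lstate -> option lstate -> option lstate -> lstate.

(* A communication graph: G j i = true  iff  j -> i. *)
Definition graph := agent -> agent -> bool.

(* Immediate snapshot graphs: induced by an ordered partition (B_1,...,B_k)
   of the agents into nonempty blocks, encoded by the block index blk : agent
   -> nat whose image is exactly {0,...,k-1}; j -> i iff blk j <= blk i. *)
Definition is_IS_graph (G : graph) : Prop :=
  exists (k : nat) (blk : agent -> nat),
    (forall i, blk i < k) /\
    (forall n, n < k -> exists i, blk i = n) /\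
    (forall j i, G j i = Nat.leb (blk j) (blk i)).

Definition config := agent -> lstate.

Definition msg (G : graph) (s : config) (j i : agent) : option lstate :=
  if G j i then Some (s j) else None.

Definition step (s : config) (G : graph) : config :=
  fun i => Msg (msg G s Ag_a i) (msg G s Ag_b i) (msg G s Ag_c i).

Definition run (x : agent -> bool) (gs : list graph) : config :=
  fold_left step gs (fun i => Inp (x i)).

Definition majority_agreement (o : agent -> bool) : Prop :=
  (o Ag_a = o Ag_b /\ o Ag_b = o Ag_c) \/
  2 <= length (filter negb [o Ag_a; o Ag_b; o Ag_c]).

Definition validity (x o : agent -> bool) : Prop :=
  forall i, exists j, o i = x j.

From Stdlib Require Import List Bool Arith ZArith Lia.
Import ListNotations.

(* Give every edge {u, v} of the protocol complex, joining a state u of agent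
   i to a state v of agent j, an integer weight: with no rounds left it is 1
   iff both endpoints decide 1; otherwise it is the alternating sum of the
   weights of the three edges into which one immediate-snapshot round
   subdivides it.  Majority agreement forces the three edges a-b, b-c, c-a of
   every final facet to carry the same weight (outputs 111, or at most one 1),
   and this equality survives the thirteen-facet chromatic subdivision of a
   round because interior edges cancel in the alternating sums.  By validity
   the edge a-b with both inputs 1 has weight 1 and the edge c-a with both
   inputs 0 has weight 0; but the input facets 110 and 010 give
   w_ab(1,1) = w_ca(0,1) = w_bc(1,0) = w_ca(0,0), a contradiction. *)

Scheme Equality for agent.

(* The state of an agent that, in one round, heard exactly [ou] from i and
   [ov] from j: this is how the edge i-j is subdivided in the rounds where the
   third agent comes last. *)
Definition edge_view (i j : agent) (ou ov : option lstate) : lstate :=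
  let heard k := if agent_beq k i then ou else if agent_beq k j then ov else None in
  Msg (heard Ag_a) (heard Ag_b) (heard Ag_c).

Definition block_graph (blk : agent -> nat) : graph :=
  fun j i => Nat.leb (blk j) (blk i).

Lemma block_graph_IS (blk : agent -> nat) :
  (forall i n, n < blk i -> blk Ag_a = n \/ blk Ag_b = n \/ blk Ag_c = n) ->
  is_IS_graph (block_graph blk).
Proof.
  intros gap_free.
  exists (S (max (blk Ag_a) (max (blk Ag_b) (blk Ag_c)))), blk.
  split; [intros []; lia|]. split; [|reflexivity].
  intros n Hn.
  assert (Hle : n <= blk Ag_a \/ n <= blk Ag_b \/ n <= blk Ag_c) by lia.
  assert (Hn' : blk Ag_a = n \/ blk Ag_b = n \/ blk Ag_c = n).
  { destruct Hle as [H|[H|H]]; apply le_lt_eq_dec in H as [H|H];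
      try exact (gap_free _ _ H); auto. }
  destruct Hn' as [E|[E|E]]; eexists; exact E.
Qed.

Ltac ordered_partition := apply block_graph_IS; intros [] n Hn; cbn in *; lia.

Definition by_agent {A : Type} (x y z : A) : agent -> A :=
  fun k => match k with Ag_a => x | Ag_b => y | Ag_c => z end.

Definition edge_blocks (i j : agent) (bi bj : nat) : agent -> nat :=
  fun k => if agent_beq k i then bi else if agent_beq k j then bj else S (max bi bj).

Lemma edge_subdivision (s : config) {i j : agent} : i <> j ->
  exists G1 G2 G3 : graph,
    is_IS_graph G1 /\ is_IS_graph G2 /\ is_IS_graph G3 /\
    step s G1 i = edge_view i j (Some (s i)) None /\
    step s G1 j = edge_view i j (Some (s i)) (Some (s j)) /\
    step s G2 i = edge_view i j (Some (s i)) (Some (s j)) /\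
    step s G2 j = edge_view i j (Some (s i)) (Some (s j)) /\
    step s G3 i = edge_view i j (Some (s i)) (Some (s j)) /\
    step s G3 j = edge_view i j None (Some (s j)).
Proof.
  intros Hij.
  exists (block_graph (edge_blocks i j 0 1)), (block_graph (edge_blocks i j 0 0)),
    (block_graph (edge_blocks i j 1 0)).
  destruct i, j; try congruence;
    repeat split; solve [ordered_partition | reflexivity].
Qed.

Definition run_from (s : config) (gs : list graph) : config := fold_left step gs s.

Definition always_after (R : nat) (P : config -> Prop) (s : config) : Prop :=
  forall gs, length gs = R -> Forall is_IS_graph gs -> P (run_from s gs).

Lemma always_after_0 P s : always_after 0 P s -> P s.
Proof. intros H. exact (H [] eq_refl (Forall_nil _)). Qed.

Lemma always_after_step {R P s G} :
  always_after (S R) P s -> is_IS_graph G -> always_after R P (step s G).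
Proof. intros H HG gs L F. apply (H (G :: gs)); cbn; auto. Qed.

Lemma majority_agreement_edges (o : agent -> bool) :
  majority_agreement o ->
  o Ag_a && o Ag_b = o Ag_c && o Ag_a /\ o Ag_b && o Ag_c = o Ag_c && o Ag_a.
Proof.
  unfold majority_agreement.
  destruct (o Ag_a), (o Ag_b), (o Ag_c); cbn; intros [[]|]; try discriminate; auto; lia.
Qed.

Lemma validity_const_input {b : bool} {o : agent -> bool} :
  validity (fun _ => b) o -> forall i, o i = b.
Proof. intros H i. destruct (H i) as [j E]. exact E. Qed.

Section EdgeWeights.

Variable d : agent -> lstate -> bool.

Fixpoint edge_weight (R : nat) (i j : agent) (u v : lstate) : Z :=
  match R with
  | O => Z.b2z (d i u && d j v)
  | S R =>
      (edge_weight R i j (edge_view i j (Some u) None) (edge_view i j (Some u) (Some v))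
       - edge_weight R i j (edge_view i j (Some u) (Some v)) (edge_view i j (Some u) (Some v))
       + edge_weight R i j (edge_view i j (Some u) (Some v)) (edge_view i j None (Some v)))%Z
  end.

Lemma edge_weight_decided R s b i j : i <> j ->
  always_after R (fun t => forall k, d k (t k) = b) s ->
  edge_weight R i j (s i) (s j) = Z.b2z b.
Proof.
  intros Hij. revert s.
  induction R as [|R IH]; intros s Hs.
  - apply always_after_0 in Hs. cbn. rewrite !Hs. now destruct b.
  - destruct (edge_subdivision s Hij)
      as (G1 & G2 & G3 & HG1 & HG2 & HG3 & E1i & E1j & E2i & E2j & E3i & E3j).
    pose proof (IH _ (always_after_step Hs HG1)) as W1.
    pose proof (IH _ (always_after_step Hs HG2)) as W2.
    pose proof (IH _ (always_after_step Hs HG3)) as W3.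
    rewrite E1i, E1j in W1. rewrite E2i, E2j in W2. rewrite E3i, E3j in W3.
    cbn [edge_weight]. lia.
Qed.

Definition balanced_facet (R : nat) (s : config) : Prop :=
  edge_weight R Ag_a Ag_b (s Ag_a) (s Ag_b) = edge_weight R Ag_c Ag_a (s Ag_c) (s Ag_a) /\
  edge_weight R Ag_b Ag_c (s Ag_b) (s Ag_c) = edge_weight R Ag_c Ag_a (s Ag_c) (s Ag_a).

Lemma majority_agreement_balanced R s :
  always_after R (fun t => majority_agreement (fun i => d i (t i))) s ->
  balanced_facet R s.
Proof.
  revert s. induction R as [|R IH]; intros s Hs.
  - apply always_after_0, majority_agreement_edges in Hs as [E1 E2].
    unfold balanced_facet; cbn. now rewrite E1, E2.
  - assert (facet : forall blk, is_IS_graph (block_graph blk) ->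
              balanced_facet R (step s (block_graph blk))).
    { intros blk Hblk. exact (IH _ (always_after_step Hs Hblk)). }
    pose proof (facet (by_agent 0 1 2) ltac:(ordered_partition)).
    pose proof (facet (by_agent 0 2 1) ltac:(ordered_partition)).
    pose proof (facet (by_agent 1 0 2) ltac:(ordered_partition)).
    pose proof (facet (by_agent 2 0 1) ltac:(ordered_partition)).
    pose proof (facet (by_agent 1 2 0) ltac:(ordered_partition)).
    pose proof (facet (by_agent 2 1 0) ltac:(ordered_partition)).
    pose proof (facet (by_agent 0 1 1) ltac:(ordered_partition)).
    pose proof (facet (by_agent 1 0 1) ltac:(ordered_partition)).
    pose proof (facet (by_agent 1 1 0) ltac:(ordered_partition)).
    pose proof (facet (by_agent 0 0 1) ltac:(ordered_partition)).
    pose proof (facet (by_agent 0 1 0) ltac:(ordered_partition)).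
    pose proof (facet (by_agent 1 0 0) ltac:(ordered_partition)).
    pose proof (facet (by_agent 0 0 0) ltac:(ordered_partition)).
    clear facet IH Hs.
    unfold balanced_facet in *; cbn [edge_weight].
    unfold step, msg, block_graph, by_agent, edge_view in *.
    cbn in *. lia.
Qed.

End EdgeWeights.

Definition initial (x : agent -> bool) : config := fun i => Inp (x i).

Theorem mainTheorem1 :
  forall R : nat,
    ~ exists delta : agent -> lstate -> bool,
        forall (x : agent -> bool) (gs : list graph),
          length gs = R ->
          Forall is_IS_graph gs ->
          majority_agreement (fun i => delta i (run x gs i)) /\
          validity x (fun i => delta i (run x gs i)).
Proof.
  intros R [d Hd].
  assert (agreement : forall x,
    always_after R (fun t => majority_agreement (fun i => d i (t i))) (initial x)).
  { intros x gs L F. exact (proj1 (Hd x gs L F)). }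
  assert (unanimity : forall b,
    always_after R (fun t => forall k, d k (t k) = b) (initial (fun _ => b))).
  { intros b gs L F. exact (validity_const_input (proj2 (Hd _ gs L F))). }
  destruct (majority_agreement_balanced d R _ (agreement (by_agent true true false)))
    as [E110ab E110bc].
  destruct (majority_agreement_balanced d R _ (agreement (by_agent false true false)))
    as [_ E010bc].
  pose proof (edge_weight_decided d R _ _ Ag_a Ag_b ltac:(discriminate) (unanimity true)).
  pose proof (edge_weight_decided d R _ _ Ag_c Ag_a ltac:(discriminate) (unanimity false)).
  unfold initial, by_agent in *. cbn in *. lia.
Qed.
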